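(* In the setting below, if $\mu$ and $\nu$ are two $\sigma$-invariant Borel probability measures on $X$ with $p(\mu)=p(\nu)$, then $\mu(A)=\nu(A)$ for every $A\in\mathcal{P}_n$ and every $n\in\mathbb{N}$.
   Context: Setting: $G$ is a countable residually finite group, $r>1$; $(\Gamma_i)_{i\ge1}$ is a strictly decreasing sequence of finite index normal subgroups of $G$ with $\bigcap_i\Gamma_i=\{1_G\}$, $\Gamma_0=G$; $(D_i)_{i\ge0}$ are finite subsets with $D_0=\{1_G\}$, $D_i$ containing exactly one element of each coset of $\Gamma_i$, $1_G\in D_i\subseteq D_{i+1}$, $G=\bigcup_iD_i$, $D_j=\bigcup_{v\in D_j\cap\Gamma_i}vD_i$ for $j>i\ge1$, and $[G:\Gamma_i],[\Gamma_i:\Gamma_{i+1}]\ge3$. $\Sigma=\{1,\dots,r\}$, $\alpha_m\in\Sigma$ with $\alpha_m\equiv m\pmod r$. $J(0)=\{1_G\}$, $J(m)=D_m\setminus\bigcup_{i<m}J(i)\Gamma_{i+1}$; $\eta(hg)=\alpha_{m+1}$ for $h\in J(m)$, $g\in\Gamma_{m+1}$; $X=\overline{\{\sigma^g\eta\}}$ with $\sigma^gx(h)=x(g^{-1}h)$. $\mathrm{Per}(x,\Gamma,\alpha)=\{g:x(\gamma g)=\alpha\ \forall\gamma\in\Gamma\}$. For $n\ge1$: $C_n=\{x\in X:\mathrm{Per}(x,\Gamma_n,\alpha)=\mathrm{Per}(\eta,\Gamma_n,\alpha)\ \forall\alpha\in\Sigma\}$, $C_{n,i}=\{x\in C_n: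 x(g)=i\ \forall g\in J(n)\}$, and $\mathcal{P}_n=\{\sigma^{v^{-1}}C_{n,i}:1\le i\le r,\ v\in D_n\}$ (a clopen partition of $X$). $p(\mu)=(\mu(\{x\in X:x(1_G)=1\}),\dots,\mu(\{x\in X:x(1_G)=r\}))$. *)

From HB Require Import structures.
From mathcomp Require Import all_boot all_order all_algebra.
From mathcomp Require Import all_classical all_reals all_analysis.
Set Implicit Arguments. Unset Strict Implicit. Unset Printing Implicit Defensive.
Import Order.TTheory GRing.Theory Num.Theory.
Local Open Scope classical_set_scope.

Record is_group (G : Type) (mul : G -> G -> G) (inv : G -> G) (one : G) : Prop := {
  grp_mulA : forall x y z, mul x (mul y z) = mul (mul x y) z;
  grp_mul1g : forall x, mul one x = x;
  grp_mulg1 : forall x, mul x one = x;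
  grp_mulVg : forall x, mul (inv x) x = one;
  grp_mulgV : forall x, mul x (inv x) = one }.

Definition normal_subgroup (G : Type) (mul : G -> G -> G) (inv : G -> G) (one : G)
  (S : set G) : Prop :=
  [/\ S one, (forall x y, S x -> S y -> S (mul x (inv y)))
    & (forall g x, S x -> S (mul (mul g x) (inv g)))].

Definition coset_transversal (G : Type) (mul : G -> G -> G) (inv : G -> G)
  (D S : set G) : Prop :=
  forall g, exists! d, D d /\ S (mul (inv d) g).

Definition index_ge3 (G : Type) (mul : G -> G -> G) (inv : G -> G)
  (A S : set G) : Prop :=
  exists a b c, [/\ A a, A b & A c] /\
    [/\ ~ S (mul (inv a) b), ~ S (mul (inv a) c) & ~ S (mul (inv b) c)].

(** alpha_m : the element of Sigma = {1,...,r} congruent to m mod r. *)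
Definition alpha (r m : nat) : nat := ((m + r).-1 %% r).+1.

Definition setmul (G : Type) (mul : G -> G -> G) (A S : set G) : set G :=
  [set y | exists a s, [/\ A a, S s & y = mul a s]].

(** Jall m i = J(i) for i <= m. *)
Fixpoint Jall (G : Type) (mul : G -> G -> G) (one : G) (Gam D : nat -> set G)
    (m : nat) : nat -> set G :=
  match m with
  | 0 => fun _ => [set one]
  | m'.+1 => fun i =>
      if (i <= m')%N then Jall mul one Gam D m' i
      else D m'.+1 `\` \bigcup_(k in [set k | (k < m'.+1)%N])
                          setmul mul (Jall mul one Gam D m' k) (Gam k.+1)
  end.

(** J(0) = {1}, J(m) = D_m \ U_{i<m} J(i) Gamma_{i+1}. *)
Definition J (G : Type) (mul : G -> G -> G) (one : G) (Gam D : nat -> set G)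
  (m : nat) : set G := Jall mul one Gam D m m.

(** The configuration space Sigma^G (symbols are natural numbers; all
    points of X take values in {1,...,r}), with the product topology of
    discrete topologies. *)
Definition Omega (G : Type) := {ptws G -> nat}.

(** eta(h g) = alpha_{m+1} for h in J(m), g in Gamma_{m+1}.
    (The sets J(m) Gamma_{m+1} are pairwise disjoint; we pick the unique m.) *)
Definition eta (G : Type) (mul : G -> G -> G) (one : G) (Gam D : nat -> set G)
  (r : nat) : Omega G :=
  fun x => alpha r (xget 0%N [set m | setmul mul (J mul one Gam D m) (Gam m.+1) x
              /\ forall k, setmul mul (J mul one Gam D k) (Gam k.+1) x -> (m <= k)%N]).+1.

Definition sigma_act (G : Type) (mul : G -> G -> G) (inv : G -> G) (g : G)
  (x : Omega G) : Omega G := fun h => x (mul (inv g) h).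

Definition Xsub (G : Type) (mul : G -> G -> G) (inv : G -> G) (one : G)
  (Gam D : nat -> set G) (r : nat) : set (Omega G) :=
  closure (range (fun g => sigma_act mul inv g (eta mul one Gam D r))).

Definition Per (G : Type) (mul : G -> G -> G) (x : Omega G) (S : set G) (a : nat)
  : set G := [set g | forall c, S c -> x (mul c g) = a].

Definition Cn (G : Type) (mul : G -> G -> G) (inv : G -> G) (one : G)
  (Gam D : nat -> set G) (r n : nat) : set (Omega G) :=
  [set x | Xsub mul inv one Gam D r x /\
     forall a, (1 <= a <= r)%N ->
       Per mul x (Gam n) a = Per mul (eta mul one Gam D r) (Gam n) a].

Definition Cni (G : Type) (mul : G -> G -> G) (inv : G -> G) (one : G)
  (Gam D : nat -> set G) (r n i : nat) : set (Omega G) :=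
  [set x | Cn mul inv one Gam D r n x /\ forall g, J mul one Gam D n g -> x g = i].

Definition Pn (G : Type) (mul : G -> G -> G) (inv : G -> G) (one : G)
  (Gam D : nat -> set G) (r n : nat) : set (set (Omega G)) :=
  [set A | exists i v, [/\ (1 <= i <= r)%N, D n v &
     A = sigma_act mul inv (inv v) @` Cni mul inv one Gam D r n i]].

Definition OmegaB (G : Type) := g_sigma_algebraType (@open (Omega G)).

From Pilot Require Import Defs.
From HB Require Import structures.
From mathcomp Require Import all_boot all_order all_algebra.
From mathcomp Require Import all_classical all_reals all_analysis.
From mathcomp Require Import finmap.
Import Order.TTheory GRing.Theory Num.Theory.
Local Open Scope classical_set_scope.
Set Implicit Arguments. Unset Strict Implicit. Unset Printing Implicit Defensive.

(* Every point x of X agrees on each finite window with a translate σ^g η, and letting the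
   windows grow pins g down to one coset uΓ_m for every m.  Through the periodic skeleton of η
   this gives Per(x, Γ_n, α) = u Per(η, Γ_n, α), and an element leaving all the sets Per(η, Γ_n, α)
   invariant lies in Γ_n.  Hence X is the disjoint union of the translates σ^{v^-1} C_n, v ∈ D_n,
   and a point of C_n is constant on J(n) and agrees with η on D_n \ J(n).  For an invariant μ
   this gives μ(C_n) = 1/|D_n| and
     μ(x(1) = i) = |J(n)| μ(C_{n,i}) + |{v ∈ D_n \ J(n) : η(v) = i}| / |D_n|,
   so μ(C_{n,i}), and with it μ on P_n, is determined by p(μ). *)

Lemma alpha_range r m : (0 < r)%N -> (1 <= alpha r m <= r)%N.
Proof. by move=> r0; rewrite /alpha ltn_pmod. Qed.

Lemma alpha_succ_neq r m : (1 < r)%N -> alpha r m.+1 <> alpha r m.+2.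
Proof.
move=> r1; rewrite /alpha !addSn -addSn !modnDr => -[] /eqP.
by rewrite -[m in X in X == _]addn0 -addn1 eqn_modDl mod0n modn_small.
Qed.

Lemma uniform_bound (T : eqType) (s : seq T) (P : T -> nat -> Prop) :
  (forall u K K', (K <= K')%N -> P u K -> P u K') ->
  (forall u, u \in s -> exists K, P u K) -> exists K, forall u, u \in s -> P u K.
Proof.
move=> Pmono; elim: s => [|u s IH] Ps; first by exists 0%N.
have [K1 PK1] := Ps u (mem_head u s).
have [K2 PK2] : exists K, forall v, v \in s -> P v K.
  by apply: IH => v vs; apply: Ps; rewrite inE vs orbT.
exists (maxn K1 K2) => v /predU1P [->|vs].
  exact: Pmono (leq_maxl _ _) PK1.
exact: Pmono (leq_maxr _ _) (PK2 v vs).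
Qed.

(** * The product topology on Omega G *)

Section PointwiseTopology.
Variable G : eqType.

Lemma nbhs_agree (x : Omega G) (s : seq G) :
  nbhs x [set y : Omega G | {in s, forall h, y h = x h}].
Proof.
elim: s => [|h s IH]; first by apply: filterS filterT => y _ h.
have Nh : nbhs x [set y : Omega G | y h = x h].
  exact: (@proj_continuous G (fun _ => nat) h x _ (discrete_set1 (x h))).
by apply: filterS (filterI Nh IH) => y [/= yh ys] k /predU1P [->|/ys].
Qed.

Lemma closure_agree (A : set (Omega G)) x : closure A x ->
  forall s : seq G, exists2 y, A y & {in s, forall h, y h = x h}.
Proof. by move=> Ax s; have [y [Ay yx]] := Ax _ (nbhs_agree x s); exists y. Qed.

Lemma closed_pointwise (I : Type) (P : I -> Prop) (f : I -> G) (a : I -> nat) :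
  closed [set x : Omega G | forall i, P i -> x (f i) = a i].
Proof.
move=> x Cx i Pi; have [y Ay yx] := closure_agree Cx [:: f i].
by rewrite -(yx (f i)) ?mem_head //; apply: Ay.
Qed.

Lemma closed_coord (h : G) (a : nat) : closed [set x : Omega G | x h = a].
Proof.
move=> x Cx; have [y Ay yx] := closure_agree Cx [:: h].
by rewrite /= -(yx h) ?mem_head.
Qed.

Lemma continuous_precomp (f : G -> G) :
  continuous (fun x : Omega G => (fun h => x (f h)) : Omega G).
Proof.
move=> x; apply/cvg_sup => i U [_ [[W oW <-]] /= Wx] /filterS; apply.
exact: (@proj_continuous G (fun _ => nat) (f i) x W (open_nbhs_nbhs (conj oW Wx))).
Qed.

End PointwiseTopology.

Lemma closed_measurable (G : Type) (A : set (OmegaB G)) :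
  closed (A : set (Omega G)) -> measurable A.
Proof.
move=> cA; rewrite -(setCK A); apply: measurableC.
by apply: sub_sigma_algebra; apply: closed_openC.
Qed.

Lemma fsbig_const_inj (T : choiceType) (R : numDomainType) (A : set T) (c d : R) :
  finite_set A -> A !=set0 -> (\sum_(v \in A) c = \sum_(v \in A) d)%R -> c = d.
Proof.
move=> fA [v Av]; rewrite !fsbig_finite // !big_const_seq !iter_addr_0.
apply: pmulrnI; rewrite count_predT lt0n size_eq0.
have : v \in fset_set A by rewrite in_fset_set // mem_set.
by apply: contraL => /eqP A0; rewrite -[v \in _]/(v \in enum_fset _) A0.
Qed.

Section ProbabilityFacts.
Variables (d : measure_display) (T : measurableType d) (R : realType).
Variable P : probability T R.

Lemma fsum_fine_measure (I : choiceType) (A : set I) (F : I -> set T) :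
  finite_set A -> (forall v, measurable (F v)) ->
  (\sum_(v \in A) P (F v) = (\sum_(v \in A) fine (P (F v)))%:E)%E.
Proof.
move=> fA mF; rewrite -fsumEFin //; apply: eq_fsbigr => v _.
by rewrite fineK // fin_num_measure.
Qed.

Lemma probability_setI_full (A B : set T) : measurable A -> measurable B ->
  P A = 1%E -> P (A `&` B) = P B.
Proof.
move=> mA mB PA1; rewrite [RHS](@measureDI _ _ _ P B A mB mA) setIC.
rewrite [X in (X + _)%E](_ : _ = 0%E) ?add0e //.
have PAc : P (~` A) = 0%E by rewrite probability_setC // PA1 subee.
apply/eqP; rewrite eq_le measure_ge0 andbT -PAc.
by apply: le_measure; [apply/mem_set/measurableD|apply/mem_set/measurableC|move=> x []].
Qed.

End ProbabilityFacts.

(** * Abstract groups and the shift action *)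

(* The axioms make [G] a [groupType] of boot/monoid, whose identities are reused below. *)
Definition group_of (G : choiceType) (mul : G -> G -> G) (inv : G -> G) (one : G)
  (Hgrp : is_group mul inv one) : Type := G.
HB.instance Definition _ (G : choiceType) (mul : G -> G -> G) (inv : G -> G)
  (one : G) (Hgrp : is_group mul inv one) := Choice.on (group_of Hgrp).
HB.instance Definition _ (G : choiceType) (mul : G -> G -> G) (inv : G -> G)
  (one : G) (Hgrp : is_group mul inv one) :=
  monoid.isGroup.Build (group_of Hgrp) (grp_mulA Hgrp) (grp_mul1g Hgrp)
    (grp_mulg1 Hgrp) (grp_mulVg Hgrp) (grp_mulgV Hgrp).

Section AbstractGroup.
Variables (G : choiceType) (mul : G -> G -> G) (inv : G -> G) (one : G).
Hypothesis Hgrp : is_group mul inv one.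
Local Notation "x * y" := (mul x y).
Local Notation "x ^-1" := (inv x).
Local Notation GG := (group_of Hgrp).

Lemma mulgA x y z : x * (y * z) = x * y * z. Proof. exact: (@monoid.mulgA GG). Qed.
Lemma mul1g x : one * x = x. Proof. exact: (@monoid.mul1g GG). Qed.
Lemma mulg1 x : x * one = x. Proof. exact: (@monoid.mulg1 GG). Qed.
Lemma mulVg x : x^-1 * x = one. Proof. exact: (@monoid.mulVg GG). Qed.
Lemma mulgV x : x * x^-1 = one. Proof. exact: (@monoid.mulgV GG). Qed.
Lemma mulKg x y : x^-1 * (x * y) = y. Proof. exact: (@monoid.mulKg GG). Qed.
Lemma mulVKg x y : x * (x^-1 * y) = y. Proof. exact: (@monoid.mulVKg GG). Qed.
Lemma mulgK x y : y * x * x^-1 = y. Proof. exact: (@monoid.mulgK GG). Qed.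
Lemma mulgVK x y : y * x^-1 * x = y. Proof. exact: (@monoid.mulgVK GG). Qed.
Lemma mulgI x y z : x * y = x * z -> y = z. Proof. exact: (@monoid.mulgI GG). Qed.
Lemma mulIg x y z : y * x = z * x -> y = z. Proof. exact: (@monoid.mulIg GG). Qed.
Lemma invgK x : x^-1^-1 = x. Proof. exact: (@monoid.invgK GG). Qed.
Lemma invgM x y : (x * y)^-1 = y^-1 * x^-1. Proof. exact: (@monoid.invgM GG). Qed.
Lemma invg1 : one^-1 = one. Proof. exact: (@monoid.invg1 GG). Qed.

Section NormalSubgroup.
Variable S : set G.
Hypothesis HS : normal_subgroup mul inv one S.

Lemma group1 : S one. Proof. by case: HS. Qed.
Lemma groupV x : S x -> S x^-1.
Proof. by case: HS => S1 SB _ Sx; rewrite -[x^-1]mul1g; apply: SB. Qed.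
Lemma groupM x y : S x -> S y -> S (x * y).
Proof. by case: HS => _ SB _ Sx Sy; rewrite -[y]invgK; apply/SB/groupV. Qed.
Lemma groupJ g x : S x -> S (g * x * g^-1). Proof. by case: HS => _ _; apply. Qed.
Lemma groupJV g x : S x -> S (g^-1 * x * g).
Proof. by move=> /(groupJ g^-1); rewrite invgK. Qed.
Lemma groupVr x : S x^-1 -> S x. Proof. by move/groupV; rewrite invgK. Qed.

End NormalSubgroup.

Section Shift.
Local Notation sigma := (sigma_act mul inv).

Lemma sigma_actM g h x : sigma g (sigma h x) = sigma (g * h) x.
Proof. by apply/funext => k; rewrite /sigma_act invgM mulgA. Qed.

Lemma sigma_act1 x : sigma one x = x.
Proof. by apply/funext => k; rewrite /sigma_act invg1 mul1g. Qed.

Lemma sigma_act_continuous g : continuous (sigma g).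
Proof. exact: continuous_precomp. Qed.

Lemma orbit_closure_sigma (y : Omega G) g x :
  closure (range (sigma^~ y)) x -> closure (range (sigma^~ y)) (sigma g x).
Proof.
move=> Cx B /sigma_act_continuous /Cx [_ [[h _ <-] Bhy]].
by exists (sigma g (sigma h y)); split=> //; exists (g * h); rewrite ?sigma_actM.
Qed.

Lemma orbit_closure_agree (y x : Omega G) : closure (range (sigma^~ y)) x ->
  forall s : seq G, exists g, {in s, forall h, x h = y (g^-1 * h)}.
Proof. by move=> Cx s; have [_ [g _ <-] gx] := closure_agree Cx s; exists g => h /gx <-. Qed.

Lemma image_sigma_act g (A : set (Omega G)) : sigma g^-1 @` A = sigma g @^-1` A.
Proof.
apply/seteqP; split=> [_ [y Ay <-]|x Ax]; first by rewrite /= sigma_actM mulgV sigma_act1.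
by exists (sigma g x); rewrite // sigma_actM mulVg sigma_act1.
Qed.

Lemma Per_sigma_act (S : set G) : normal_subgroup mul inv one S ->
  forall w x a p, Per mul (sigma w x) S a p <-> Per mul x S a (w^-1 * p).
Proof.
move=> HS w x a p; split=> Pp c Sc.
  by have := Pp _ (groupJ HS w Sc); rewrite /sigma_act !mulgA mulVg mul1g -mulgA.
rewrite /sigma_act; have -> : w^-1 * (c * p) = w^-1 * c * w * (w^-1 * p).
  by rewrite !mulgA mulgK.
exact: Pp (groupJV HS w Sc).
Qed.

End Shift.

(** * The layers of eta *)

Section Skeleton.
Variables (r : nat) (Gam D : nat -> set G).
Hypothesis HGam0 : Gam 0%N = setT.
Hypothesis HGamnorm : forall i, normal_subgroup mul inv one (Gam i).
Hypothesis HGamdec : forall i, Gam i.+1 `<` Gam i.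
Hypothesis HD0 : D 0%N = [set one].
Hypothesis HDtr : forall i, coset_transversal mul inv (D i) (Gam i).
Hypothesis HDinc : forall i, D i `<=` D i.+1.
Hypothesis HDfin : forall i, finite_set (D i).
Hypothesis HDcup : \bigcup_i D i = setT.
Hypothesis HDblock : forall i j, (1 <= i)%N -> (i < j)%N ->
  D j = \bigcup_(v in D j `&` Gam i) [set v * d | d in D i].

Local Notation J := (Defs.J mul one Gam D).
Local Notation eta := (Defs.eta mul one Gam D r).
Local Notation Gam1 := (group1 (HGamnorm _)).
Local Notation GamV := (groupV (HGamnorm _)).
Local Notation GamM := (groupM (HGamnorm _)).
Local Notation GamJ := (groupJ (HGamnorm _)).
Local Notation GamJV := (groupJV (HGamnorm _)).

(* [layer k] is the paper's J(k)Γ_{k+1}, where η takes the value α_{k+1}; the points lying in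
   no layer below m form J(m)Γ_m (holeP). *)
Definition layer k := setmul mul (J k) (Gam k.+1).
Definition hole m g := forall k, (k < m)%N -> ~ layer k g.

Lemma Gam_subset i j : (i <= j)%N -> Gam j `<=` Gam i.
Proof.
move=> /subnK <-; elim: (j - i)%N => [|k IH] //= x.
by rewrite addSn => /(properW (HGamdec _)) /IH.
Qed.

Lemma Gam_strict m : exists2 t, Gam m t & ~ Gam m.+1 t.
Proof.
have [_ /nonsubset [t [Gt nGt]]] := HGamdec m.
by exists t.
Qed.

Lemma Gam_drop s m : ~ Gam m s -> exists k, [/\ (k < m)%N, Gam k s & ~ Gam k.+1 s].
Proof.
elim: m => [|m IH] Ns; first by exfalso; apply: Ns; rewrite HGam0.
have [Gs|/IH [k [km Gs NGs]]] := pselect (Gam m s); first by exists m.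
by exists k; rewrite ltnW.
Qed.

Lemma transversal_eq i d d' : D i d -> D i d' -> Gam i (d^-1 * d') -> d = d'.
Proof.
move=> Dd Dd' Gdd; have [e [_ He]] := HDtr i d'.
by rewrite -(He d (conj Dd Gdd)) (He d') //; split; rewrite // mulVg; apply: Gam1.
Qed.

Lemma transversal_ex i g : exists2 d, D i d & Gam i (d^-1 * g).
Proof. by have [d [[]]] := HDtr i g; exists d. Qed.

Lemma Jall_J m i : (i <= m)%N -> Jall mul one Gam D m i = J i.
Proof.
elim: m i => [|m IH] i; first by rewrite leqn0 => /eqP ->.
rewrite leq_eqVlt ltnS => /orP [/eqP -> //|im] /=.
by rewrite im IH.
Qed.

Lemma J_D_hole m g : J m g <-> D m g /\ hole m g.
Proof.
case: m => [|m]; first by rewrite /Defs.J /= HD0; split=> [->|[]//]; split.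
rewrite /Defs.J /= ltnn; split=> [[Dg NL]|[Dg Hg]].
  split=> // k km Lg; apply: NL; exists k => //.
  by rewrite Jall_J.
split=> // -[k km]; rewrite Jall_J //; exact: Hg.
Qed.

Lemma J_D m g : J m g -> D m g. Proof. by case/J_D_hole. Qed.
Lemma J_hole m g : J m g -> hole m g. Proof. by case/J_D_hole. Qed.

Lemma J_layer k j : J k j -> layer k j.
Proof. by move=> Jj; exists j, one; rewrite mulg1; split=> //; apply: Gam1. Qed.

Lemma layer_mulr k g c : Gam k.+1 c -> layer k g -> layer k (g * c).
Proof.
move=> Gc [j [x [Jj Gx ->]]]; exists j, (x * c).
by rewrite mulgA; split=> //; apply: GamM.
Qed.

Lemma layer_mull k g c : Gam k.+1 c -> layer k g -> layer k (c * g).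
Proof.
move=> Gc [j [x [Jj Gx ->]]]; exists j, (j^-1 * c * j * x); split=> //.
  by apply: GamM => //; apply: GamJV.
by rewrite !mulgA mulgV mul1g.
Qed.

Lemma hole_mulr m g c : Gam m c -> hole m g -> hole m (g * c).
Proof.
move=> Gc Hg k km Lgc; apply: (Hg k km); rewrite -(mulgK c g).
by apply: layer_mulr Lgc; apply/GamV/(Gam_subset km).
Qed.

Lemma hole_mull m g c : Gam m c -> hole m g -> hole m (c * g).
Proof.
move=> Gc Hg k km Lcg; apply: (Hg k km); rewrite -(mulKg c g).
by apply: layer_mull Lcg; apply/GamV/(Gam_subset km).
Qed.

Lemma holeP m g : hole m g <-> exists j c, [/\ J m j, Gam m c & g = j * c].
Proof.
split=> [Hg|[j [c [/J_hole Hj Gc ->]]]]; last exact: hole_mulr.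
have [d Dd Gdg] := transversal_ex m g.
exists d, (d^-1 * g); split; rewrite ?mulVKg //; apply/J_D_hole; split=> //.
by rewrite -[d](mulgK (d^-1 * g)) mulVKg; apply/hole_mulr/Hg/GamV.
Qed.

Lemma layer_hole k g : layer k g -> hole k g.
Proof. by move=> [j [x [/J_hole Hj Gx ->]]]; apply/hole_mulr/Hj/(Gam_subset (leqnSn k)). Qed.

Lemma holeS m g : hole m.+1 g <-> hole m g /\ ~ layer m g.
Proof.
split=> [Hg|[Hg NLg] k]; first by split=> [k km|]; apply: Hg; rewrite // ltnW.
by rewrite ltnS leq_eqVlt => /orP [/eqP ->|]; last exact: Hg.
Qed.

Lemma layer_uniq k k' g : layer k g -> layer k' g -> k = k'.
Proof.
move=> Lk Lk'; case: (ltngtP k k') => // kk'.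
  by case: (layer_hole Lk' kk').
by case: (layer_hole Lk kk').
Qed.

Lemma eta_layer m g : layer m g -> eta g = alpha r m.+1.
Proof.
move=> Lg; rewrite /Defs.eta (@xget_unique _ 0%N _ m) //.
  by split=> // k Lk; rewrite (layer_uniq Lg Lk).
by move=> k [Lk _]; apply: layer_uniq Lk Lg.
Qed.

Lemma J_layer_Gam m j c : J m j -> Gam m c -> layer m (j * c) -> Gam m.+1 c.
Proof.
move=> Jj Gc [j' [x [Jj' Gx E]]].
have j'j : j' = j.
  apply: transversal_eq (J_D Jj') (J_D Jj) _.
  have -> : j'^-1 * j = x * c^-1 by rewrite -(mulgK c j) E -!mulgA mulKg.
  by apply: GamM (Gam_subset (leqnSn m) Gx) (GamV Gc).
by move: E; rewrite j'j => /mulgI ->.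
Qed.

Lemma hole_next m j t : J m j -> Gam m t -> ~ Gam m.+1 t -> hole m.+1 (j * t).
Proof.
move=> Jj Gt NGt; apply/holeS; split; first exact/hole_mulr/J_hole.
by move/(J_layer_Gam Jj Gt).
Qed.

Lemma hole_deeper d m g : hole m g -> exists2 z, Gam m (g^-1 * z) & hole (m + d) z.
Proof.
elim: d m g => [|d IH] m g Hg; first by exists g; rewrite ?addn0 // mulVg; apply: Gam1.
have [j [c [Jj Gc ->]]] := proj1 (holeP _ _) Hg.
have [t Gt NGt] := Gam_strict m.
have [z Gz Hz] := IH _ _ (hole_next Jj Gt NGt).
exists z; last by rewrite addnS -addSn.
have -> : (j * c)^-1 * z = c^-1 * t * ((j * t)^-1 * z) by rewrite !invgM !mulgA mulgK.
by apply: GamM; [apply: GamM; first apply: GamV|apply: (Gam_subset (leqnSn m))].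
Qed.

Lemma J_nonempty m : exists j, J m j.
Proof.
have hole0 : hole 0 one by move=> k; rewrite ltn0.
have [z _ /holeP [j [c [Jj _ _]]]] := hole_deeper m hole0.
by exists j.
Qed.

Lemma hole_two_layers m q : hole m q ->
  exists c1 c2, [/\ Gam m c1, Gam m c2, layer m (c1 * q) & layer m.+1 (c2 * q)].
Proof.
move=> /holeP [h [d [Jh Gd ->]]].
have [t Gt NGt] := Gam_strict m.
have [j [e [Jj Ge Ejt]]] := proj1 (holeP _ _) (hole_next Jh Gt NGt).
exists (h * d^-1 * h^-1), (j * (h * d)^-1); split.
- by apply/GamJ/GamV.
- have -> : j * (h * d)^-1 = h * (t * e^-1 * d^-1) * h^-1.
    have -> : j = h * t * e^-1 by rewrite Ejt mulgK.
    by rewrite invgM !mulgA.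
  apply: GamJ; apply: GamM; last exact: GamV.
  by apply: GamM => //; apply/GamV/(Gam_subset (leqnSn m)).
- by rewrite !mulgA mulgVK mulgVK; apply: J_layer.
- by rewrite mulgVK; apply: J_layer.
Qed.

Local Notation X := (Xsub mul inv one Gam D r).

Lemma D_subset K K' : (K <= K')%N -> D K `<=` D K'.
Proof.
move=> /subnK <-; elim: (K' - K)%N => [|k IH] //= h /IH.
by rewrite addSn; apply: HDinc.
Qed.

Lemma D_cover_seq (s : seq G) : exists K, {in s, forall h, D K h}.
Proof.
elim: s => [|g s [K Ks]]; first by exists 0%N.
have [K' _ DK'g] : (\bigcup_i D i) g by rewrite HDcup.
exists (maxn K K') => h /predU1P [->|hs]; first exact: D_subset (leq_maxr K K') _ _.
exact: D_subset (leq_maxl K K') _ (Ks h hs).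
Qed.

Lemma D_enum K : exists s : seq G, forall h, D K h <-> h \in s.
Proof. by have [s Ds] := proj1 (finite_seqP _) (HDfin K); exists s => h; rewrite Ds. Qed.

Definition follows m (x : Omega G) u := forall K,
  exists2 g, Gam m (u^-1 * g) & forall h, D K h -> x h = eta (g^-1 * h).

Lemma follows_subset m m' x u : (m <= m')%N -> follows m' x u -> follows m x u.
Proof. by move=> mm' Fx K; have [g Gg xg] := Fx K; exists g; first exact: Gam_subset Gg. Qed.

Lemma follows_ex m x : X x -> exists2 u, D m u & follows m x u.
Proof.
(* Otherwise each of the finitely many cosets uΓ_m, u ∈ D_m, fails on some window, hence
   all of them fail on a common window, on which x agrees with some translate of η. *)
move=> Xx; apply: contrapT => Nf; have [s sD] := D_enum m.
have [K0 Bad] : exists K, forall u, u \in s ->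
    ~ exists2 g, Gam m (u^-1 * g) & forall h, D K h -> x h = eta (g^-1 * h).
  apply: uniform_bound => [u K K' KK' NK [g Gg xg]|u /sD Du].
    by apply: NK; exists g => // h /(D_subset KK'); apply: xg.
  apply: contrapT => Nu; apply: Nf; exists u => // K.
  by apply: contrapT => NK; apply: Nu; exists K.
have [s0 s0D] := D_enum K0; have [g xg] := orbit_closure_agree Xx s0.
have [u Du Gug] := transversal_ex m g.
by apply: (Bad u (proj1 (sD u) Du)); exists g => // h /s0D /xg.
Qed.

Lemma D_layer_J k d : D k.+1 d -> layer k d -> J k d.
Proof.
move=> Dd [j [g [Jj Gg Ed]]]; subst d.
have -> // : j * g = j.
by apply: esym; apply: (transversal_eq (HDinc (J_D Jj)) Dd); rewrite mulKg.
Qed.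

Lemma layer_coset k c w x : Gam k.+1 (w^-1 * c) ->
  layer k (c * x) <-> layer k (w * x).
Proof.
move=> Gwc; have E : c * x = w * x * (x^-1 * (w^-1 * c) * x).
  by rewrite !mulgA mulgK mulgV mul1g.
have Gx := GamJV x Gwc.
by rewrite E; split=> [/(layer_mulr (GamV Gx))|]; rewrite ?mulgK //; apply: layer_mulr.
Qed.

(** * Periodic parts at level n *)

Section Periods.
Hypothesis Hr : (1 < r)%N.
Variable n : nat.
Hypothesis Hn : (1 <= n)%N.
Local Notation Per_eta a := (Per mul eta (Gam n) a).

Lemma Per_mull (x : Omega G) a c p :
  Gam n c -> Per mul x (Gam n) a p -> Per mul x (Gam n) a (c * p).
Proof. by move=> Gc Pp c' Gc'; rewrite mulgA; apply/Pp/GamM. Qed.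

Lemma Per_mullE (x : Omega G) a c p :
  Gam n c -> Per mul x (Gam n) a (c * p) -> Per mul x (Gam n) a p.
Proof. by move=> Gc; rewrite -{2}(mulKg c p); apply/Per_mull/GamV. Qed.

Lemma layer_Per_eta k g : (k < n)%N -> layer k g -> Per_eta (alpha r k.+1) g.
Proof. by move=> kn Lg c Gc; apply/eta_layer/layer_mull/Lg/(Gam_subset kn). Qed.

Lemma hole_Per_eta q a : hole n q -> ~ Per_eta a q.
Proof.
move=> /hole_two_layers [c1 [c2 [Gc1 Gc2 Lc1 Lc2]]] Pq.
apply: (@alpha_succ_neq r n Hr).
by rewrite -(eta_layer Lc1) -(eta_layer Lc2) (Pq _ Gc1) (Pq _ Gc2).
Qed.

Lemma Per_eta_stable_Gam s :
  (forall a, (1 <= a <= r)%N -> forall p, Per_eta a p -> Per_eta a (s * p)) ->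
  Gam n s.
Proof.
(* If s leaves the chain at level k < n, then s j is a hole at level k.+1 for j ∈ J(k).
   Deepening it to a hole z at level n inside s jΓ_{k+1} ⊆ s (layer k), invariance under s
   gives z the Γ_n-periodic value α_{k+1}, which no hole has. *)
move=> Ss; apply: contrapT => /Gam_drop [k [kn Gs NGs]].
have [j Jj] := J_nonempty k.
have Hsj : hole k.+1 (s * j).
  have -> : s * j = j * (j^-1 * s * j) by rewrite -!mulgA mulVKg.
  apply: hole_next => //; first exact: GamJV.
  by move=> /(GamJ j); rewrite !mulgA mulgV mul1g mulgK.
have [z Gz Hz] := hole_deeper (n - k.+1) Hsj; rewrite subnKC // in Hz.
apply: (hole_Per_eta (a := alpha r k.+1) Hz).
rewrite -(mulVKg (s * j) z) -mulgA; apply: Ss; first exact/alpha_range/ltnW.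
by apply/layer_Per_eta/layer_mulr/J_layer.
Qed.

Local Notation sigma := (sigma_act mul inv).
Local Notation Cn := (Cn mul inv one Gam D r n).

Lemma follows_Per_eta x u a p :
  follows n x u -> Per_eta a (u^-1 * p) -> Per mul x (Gam n) a p.
Proof.
move=> Fx Pp c Gc; have [K Kcp] := D_cover_seq [:: c * p].
have [g Gug xg] := Fx K; rewrite xg; last exact/Kcp/mem_head.
have -> : g^-1 * (c * p) = (u^-1 * g)^-1 * (u^-1 * c * u) * (u^-1 * p).
  by rewrite invgM invgK !mulgA mulgK mulgK.
by apply: Pp; apply: GamM (GamV Gug) (GamJV u Gc).
Qed.

(* Level n.+2 makes g^-1 u preserve both layers n and n.+1 given by hole_two_layers. *)
Lemma follows_hole_not_Per x u a p :
  follows n.+2 x u -> hole n (u^-1 * p) -> ~ Per mul x (Gam n) a p.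
Proof.
move=> Fx /hole_two_layers [c1 [c2 [Gc1 Gc2 L1 L2]]] Pp.
set s := [:: u * c1 * u^-1 * p; u * c2 * u^-1 * p].
have [K Ks] := D_cover_seq s; have [g Gug xg] := Fx K.
have Ggu : Gam n.+2 (g^-1 * u) by have := GamV Gug; rewrite invgM invgK.
have xa k c : (k <= n.+1)%N -> Gam n c -> layer k (c * (u^-1 * p)) ->
    u * c * u^-1 * p \in s -> alpha r k.+1 = a.
  move=> kn Gc Lk /Ks /xg; rewrite -(Pp _ (GamJ u Gc)) => ->.
  have -> : g^-1 * (u * c * u^-1 * p) = g^-1 * u * (c * (u^-1 * p)) by rewrite !mulgA.
  by apply/esym/eta_layer/layer_mull/Lk/(Gam_subset _ Ggu).
apply: (@alpha_succ_neq r n Hr).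
by rewrite (xa n c1) ?(xa n.+1 c2) ?inE ?eqxx ?orbT.
Qed.

Lemma Per_follows x u a p :
  follows n.+2 x u -> Per mul x (Gam n) a p -> Per_eta a (u^-1 * p).
Proof.
move=> Fx Pp; case: (pselect (hole n (u^-1 * p))) => [Hq|].
  by case: (follows_hole_not_Per Fx Hq Pp).
move=> /existsNP [k /not_implyP [kn /contrapT Lk]].
have Pk := layer_Per_eta kn Lk; suff -> : a = alpha r k.+1 by [].
have [K Kp] := D_cover_seq [:: p]; have [g Gug xg] := Fx K.
rewrite -(Pp one Gam1) mul1g xg; last exact/Kp/mem_head.
have -> : g^-1 * p = g^-1 * u * (u^-1 * p) by rewrite mulgA mulgK.
apply: Pk; have := GamV Gug; rewrite invgM invgK; apply: Gam_subset.
exact: leqW.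
Qed.

Lemma X_Per_translate x : X x -> exists u, follows n.+2 x u /\
  forall a p, Per mul x (Gam n) a p <-> Per_eta a (u^-1 * p).
Proof.
move=> Xx; have [u _ Fx] := follows_ex n.+2 Xx; exists u; split=> // a p.
by split; [apply: Per_follows|apply/follows_Per_eta/(follows_subset (leqW (leqnSn n)) Fx)].
Qed.

Lemma D_block_mul j w x : (n < j)%N -> D j w -> Gam n w -> D n x -> D j (w * x).
Proof. by move=> nj Dw Gw Dx; rewrite (HDblock Hn nj); exists w => //; exists x. Qed.

Lemma D_block_mulr k w x x' : (n <= k)%N -> Gam n w -> D n x -> D n x' ->
  D k (w * x) -> D k (w * x').
Proof.
rewrite leq_eqVlt => /orP [/eqP <-|nk] Gw Dx Dx' Dwx.
  have wx : x = w * x by apply: (transversal_eq Dx Dwx); rewrite mulgA; apply: GamJV.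
  have -> : w = one by apply: (@mulIg x); rewrite -wx mul1g.
  by rewrite mul1g.
apply: D_block_mul => //; move: Dwx; rewrite {1}(HDblock Hn nk).
move=> [v [Dv Gv] [e De E]]; suff wv : w = v by rewrite wv.
have ex : e = x.
  apply: transversal_eq De Dx _.
  have -> : e^-1 * x = e^-1 * (w^-1 * v) * e by rewrite -[x](mulKg w) -E !mulgA.
  exact/GamJV/GamM/Gv/GamV.
by apply: (@mulIg x); rewrite -E ex.
Qed.

Lemma layer_translate_J k c h h' : Gam n c -> J n h -> J n h' ->
  layer k (c * h) -> layer k (c * h').
Proof.
(* Below n, c h lies in the hole J(n)Γ_n.  From n on, c may be replaced by its representative
   w ∈ D_{k+1}, and the block structure of the D_j keeps w h and w h' in D_{k+1}. *)
elim/ltn_ind: k c h h' => k IH c h h' Gc Jh Jh' Lch.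
have [kn|nk] := ltnP k n.
  by case: (hole_mull Gc (J_hole Jh) kn).
have [w Dw Gwc] := transversal_ex k.+1 c.
have Gw : Gam n w.
  rewrite -[w](mulgK (w^-1 * c)) mulVKg; apply/GamM/GamV/(Gam_subset _ Gwc) => //.
  exact: leqW.
have Jwh : J k (w * h).
  by apply/D_layer_J; [apply: D_block_mul (J_D Jh)|apply/(layer_coset _ Gwc)].
apply/(layer_coset _ Gwc)/J_layer/J_D_hole; split.
  exact: D_block_mulr (J_D Jh) (J_D Jh') (J_D Jwh).
by move=> k' k'k /(IH k' k'k w h' h Gw Jh' Jh); apply: J_hole Jwh k' k'k.
Qed.

Lemma eta_translate_J c h h' : Gam n c -> J n h -> J n h' -> eta (c * h) = eta (c * h').
Proof.
(* Comparing the defining predicates also covers points in no layer, where η takes the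
   default value α_1. *)
move=> Gc Jh Jh'.
have E m : setmul mul (J m) (Gam m.+1) (c * h) = setmul mul (J m) (Gam m.+1) (c * h').
  by apply/propext; split; apply: layer_translate_J.
rewrite /Defs.eta; congr (alpha r (xget 0%N _).+1); apply/funext => m /=.
by rewrite E; under eq_forall do rewrite E.
Qed.

Lemma Cn_follows x : Cn x -> exists2 u, Gam n u & follows n x u.
Proof.
move=> [Xx PerE]; have [u [Fx Pu]] := X_Per_translate Xx.
exists u; last exact: follows_subset (leqW (leqnSn n)) Fx.
apply: Per_eta_stable_Gam => a ar p Pp.
by rewrite -(PerE a ar); apply/Pu; rewrite mulKg.
Qed.

Lemma Cn_Per_sub x : Cn x <->
  X x /\ forall a, (1 <= a <= r)%N -> Per_eta a `<=` Per mul x (Gam n) a.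
Proof.
split=> [[Xx PerE]|[Xx Psub]]; first by split=> // a ar p; rewrite PerE.
split=> // a ar; have [u [_ Pu]] := X_Per_translate Xx.
have Gu : Gam n u^-1 by apply: Per_eta_stable_Gam => b br p /(Psub b br) /Pu.
apply/funext => p; apply/propext; rewrite Pu.
split=> [|Pp]; last exact: Per_mull.
by rewrite -{2}[p](mulVKg u); apply: Per_mull; apply: groupVr.
Qed.

Lemma Cn_const_J x h h' : Cn x -> J n h -> J n h' -> x h = x h'.
Proof.
move=> Cx Jh Jh'; have [u Gu Fx] := Cn_follows Cx; have [g Gug xg] := Fx n.
have Gg : Gam n g^-1 by apply: GamV; rewrite -[g](mulVKg u); apply: GamM.
by rewrite (xg h (J_D Jh)) (xg h' (J_D Jh')); apply: eta_translate_J.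
Qed.

Lemma Cn_eta_off_J x v : Cn x -> D n v -> ~ J n v -> x v = eta v.
Proof.
move=> [_ PerE] Dv NJv.
have [k [kn Lk]] : exists k, (k < n)%N /\ layer k v.
  apply: contrapT => Nk; apply/NJv/J_D_hole; split=> // k kn Lk.
  by apply: Nk; exists k.
have ar : (1 <= alpha r k.+1 <= r)%N by apply/alpha_range/ltnW.
have Pv : Per mul x (Gam n) (alpha r k.+1) v by rewrite PerE //; apply: layer_Per_eta.
by rewrite -[v]mul1g (Pv one Gam1) -(layer_Per_eta kn Lk Gam1).
Qed.

Lemma Cn_translate_ex x : X x -> exists2 v, D n v & Cn (sigma v x).
Proof.
move=> Xx; have [u [_ Pu]] := X_Per_translate Xx.
have [v Dv Gvu] := transversal_ex n u^-1.
exists v => //; split; first exact: orbit_closure_sigma.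
move=> a ar; apply/funext => p; apply/propext.
rewrite (Per_sigma_act (HGamnorm n)) Pu mulgA.
have Guv : Gam n (u^-1 * v^-1) by have := GamJV u Gvu; rewrite !mulgA mulgVK.
by split; [apply: Per_mullE|apply: Per_mull].
Qed.

Lemma Cn_translate_uniq x v w :
  D n v -> D n w -> Cn (sigma v x) -> Cn (sigma w x) -> v = w.
Proof.
move=> Dv Dw [_ Pv] [_ Pw].
have Gvw : Gam n (v * w^-1).
  apply: Per_eta_stable_Gam => a ar p.
  rewrite -{1}(Pw a ar) -(Pv a ar) => /(Per_sigma_act (HGamnorm n)) Pp.
  by apply/(Per_sigma_act (HGamnorm n)); rewrite !mulgA mulVg mul1g.
apply: transversal_eq Dv Dw _.
have -> : v^-1 * w = v^-1 * (v * w^-1)^-1 * v by rewrite invgM invgK !mulgA mulgVK.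
exact/GamJV/GamV.
Qed.

Local Notation Cni := (Cni mul inv one Gam D r n).

Lemma Cn_closed : closed Cn.
Proof.
pose K (i : nat * G * G) := [/\ (1 <= i.1.1 <= r)%N, Per_eta i.1.1 i.1.2 & Gam n i.2].
have -> : Cn = X `&` [set x | forall i, K i -> x (i.2 * i.1.2) = i.1.1].
  apply/seteqP; split=> x; rewrite Cn_Per_sub => -[Xx Hx]; split=> //.
    by move=> [[a p] c] [/= ar Pp Gc]; apply: Hx.
  by move=> a ar p Pp c Gc; apply: (Hx (a, p, c)).
by apply: closedI; [apply: closed_closure|apply: closed_pointwise].
Qed.

Lemma Cni_closed i : closed (Cni i).
Proof.
have -> : Cni i = Cn `&` [set x | forall g, J n g -> x (id g) = (fun=> i) g] by [].
by apply: closedI; [apply: Cn_closed|apply: closed_pointwise].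
Qed.

Lemma bigcup_translates_Cn (Q : G -> set (Omega G)) (B : set (Omega G)) :
  (forall v x, Q v (sigma v x) <-> B x) ->
  \bigcup_(v in D n) sigma v @^-1` (Cn `&` Q v) = X `&` B.
Proof.
move=> QB; apply/seteqP; split=> [x [v _ [Cvx /QB Bx]]|x [Xx Bx]].
  split=> //; have -> : x = sigma v^-1 (sigma v x) by rewrite sigma_actM mulVg sigma_act1.
  by case: Cvx => Xvx _; apply: orbit_closure_sigma.
by have [v Dv Cvx] := Cn_translate_ex Xx; exists v => //; split=> //; apply/QB.
Qed.

Lemma Cn_value_J i v : J n v -> Cn `&` [set y | y v = i] = Cni i.
Proof.
move=> Jv; apply/seteqP; split=> [x [Cx xv]|x [Cx xJ]]; last by split=> //; apply: xJ.
by split=> // g Jg; rewrite (Cn_const_J Cx Jg Jv).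
Qed.

Lemma Cn_value_off_J i v : D n v -> ~ J n v ->
  Cn `&` [set y | y v = i] = if eta v == i then Cn else set0.
Proof.
move=> Dv NJv; apply/seteqP; split=> [x [Cx /=]|x].
  by rewrite (Cn_eta_off_J Cx Dv NJv) => ->; rewrite eqxx.
by case: eqP => // <- Cx; split=> //=; apply: Cn_eta_off_J.
Qed.

(** * Measures of the sets C_{n,i} *)

Section Measure.
Variables (R : realType) (mu : probability (OmegaB G) R).
Hypothesis HmuX : mu X = 1%E.
Hypothesis Hmuinv : forall g (A : set (OmegaB G)), measurable A ->
  mu (sigma g @^-1` A) = mu A.

Lemma measure_translates_Cn (Q : G -> set (Omega G)) : (forall v, closed (Q v)) ->
  mu (\bigcup_(v in D n) sigma v @^-1` (Cn `&` Q v)) =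
  (\sum_(v \in D n) mu (Cn `&` Q v))%E.
Proof.
move=> cQ; have cCQ v : closed (Cn `&` Q v) by apply: closedI; [apply: Cn_closed|apply: cQ].
rewrite (@measure_fin_bigcup _ _ _ mu _ (D n)
  (fun v => sigma v @^-1` (Cn `&` Q v) : set (OmegaB G))) //.
- by apply: eq_fsbigr => v _; apply: Hmuinv; exact: closed_measurable (cCQ v).
- by move=> v w Dv Dw [x [[Cvx _] [Cwx _]]]; exact: Cn_translate_uniq Dv Dw Cvx Cwx.
- move=> v _; apply: closed_measurable; apply: preimage_closed; last exact: cCQ.
  by move=> x _; apply: sigma_act_continuous.
Qed.

Lemma sum_measure_Cn : (\sum_(v \in D n) fine (mu Cn) = 1)%R.
Proof.
have mCn : measurable (Cn : set (OmegaB G)) by apply: (@closed_measurable G); apply: Cn_closed.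
apply: (@EFin_inj R); rewrite -(fsum_fine_measure mu (HDfin n) (fun=> mCn)).
rewrite -HmuX -(setIT X) -(@bigcup_translates_Cn (fun=> setT)) // measure_translates_Cn //.
by apply: eq_fsbigr => v _; rewrite setIT.
Qed.

Lemma measure_value_decomp i : fine (mu [set x | x one = i]) =
  (\sum_(v \in D n `&` J n) fine (mu (Cni i)) +
   \sum_(v \in D n `&` ~` J n) (if eta v == i then fine (mu Cn) else 0))%R.
Proof.
have mCV v : measurable (Cn `&` [set y : Omega G | y v = i] : set (OmegaB G)).
  by apply: (@closed_measurable G); apply: closedI; [apply: Cn_closed|apply: closed_coord].
have mX : measurable (X : set (OmegaB G)).
  by apply: (@closed_measurable G); apply: closed_closure.
have mV : measurable ([set x | x one = i] : set (OmegaB G)).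
  by apply: (@closed_measurable G); apply: closed_coord.
have <- : (\sum_(v \in D n) fine (mu (Cn `&` [set y | y v = i])))%R =
    fine (mu [set x | x one = i]).
  apply: (@EFin_inj R); rewrite -(fsum_fine_measure mu (HDfin n) mCV).
  rewrite fineK ?fin_num_measure // -measure_translates_Cn; last first.
    by move=> v; apply: closed_coord.
  rewrite (@bigcup_translates_Cn _ [set x | x one = i]) ?probability_setI_full //.
  by move=> v x; rewrite /= /sigma_act mulVg.
rewrite (fsbigID (J n)) //; congr (_ + _)%R; apply: eq_fsbigr => v /set_mem [Dv Jv].
  by rewrite Cn_value_J.
by rewrite Cn_value_off_J //; case: eqP => // _; rewrite measure0.
Qed.

End Measure.

Section TwoMeasures.
Variables (R : realType) (mu nu : probability (OmegaB G) R).
Hypothesis HmuX : mu X = 1%E.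
Hypothesis HnuX : nu X = 1%E.
Hypothesis Hmuinv : forall g (A : set (OmegaB G)), measurable A ->
  mu (sigma g @^-1` A) = mu A.
Hypothesis Hnuinv : forall g (A : set (OmegaB G)), measurable A ->
  nu (sigma g @^-1` A) = nu A.
Hypothesis Hp : forall i, (1 <= i <= r)%N ->
  mu [set x : OmegaB G | x one = i] = nu [set x : OmegaB G | x one = i].

Lemma measure_Cni_eq i : (1 <= i <= r)%N -> mu (Cni i) = nu (Cni i).
Proof.
move=> ir.
have Dn0 : D n !=set0 by have [d Dd _] := transversal_ex n one; exists d.
have DJ0 : D n `&` J n !=set0.
  by have [j Jj] := J_nonempty n; exists j; split=> //; apply: J_D.
have mCni : measurable (Cni i : set (OmegaB G)).
  by apply: (@closed_measurable G); apply: Cni_closed.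
have eCn : fine (mu Cn) = fine (nu Cn).
  apply: (fsbig_const_inj (HDfin n) Dn0).
  by rewrite (sum_measure_Cn HmuX Hmuinv) (sum_measure_Cn HnuX Hnuinv).
have := measure_value_decomp HmuX Hmuinv i.
rewrite Hp // (measure_value_decomp HnuX Hnuinv) eCn => /addIr.
move=> /(fsbig_const_inj (finite_setIl _ (HDfin n)) DJ0) e.
by rewrite -(fineK (fin_num_measure mu _ mCni)) -(fineK (fin_num_measure nu _ mCni)) e.
Qed.

Lemma Pn_measure_eq A : Pn mul inv one Gam D r n A -> mu A = nu A.
Proof.
move=> [i [v [ir Dv ->]]]; rewrite image_sigma_act.
have mCni : measurable (Cni i : set (OmegaB G)).
  by apply: (@closed_measurable G); apply: Cni_closed.
by rewrite Hmuinv // Hnuinv // measure_Cni_eq.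
Qed.

End TwoMeasures.

End Periods.

End Skeleton.
End AbstractGroup.

Unset Implicit Arguments.

Theorem lemma4p13
  (G : countType) (mul : G -> G -> G) (inv : G -> G) (one : G)
  (Hgrp : is_group mul inv one)
  (r : nat) (Hr : (1 < r)%N)
  (Gam : nat -> set G) (D : nat -> set G)
  (HGam0 : Gam 0%N = setT)
  (HGamnorm : forall i, normal_subgroup mul inv one (Gam i))
  (HGamdec : forall i, Gam i.+1 `<` Gam i)
  (HGamcap : \bigcap_i Gam i = [set one])
  (HD0 : D 0%N = [set one])
  (HDfin : forall i, finite_set (D i))
  (HDtr : forall i, coset_transversal mul inv (D i) (Gam i))
  (HD1 : forall i, D i one)
  (HDinc : forall i, D i `<=` D i.+1)
  (HDcup : \bigcup_i D i = setT)
  (HDblock : forall i j, (1 <= i)%N -> (i < j)%N ->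
     D j = \bigcup_(v in D j `&` Gam i) [set mul v d | d in D i])
  (Hind1 : forall i, (1 <= i)%N -> index_ge3 mul inv setT (Gam i))
  (Hind2 : forall i, (1 <= i)%N -> index_ge3 mul inv (Gam i) (Gam i.+1))
  (R : realType) (mu nu : probability (OmegaB G) R)
  (HmuX : mu (Xsub mul inv one Gam D r) = 1%E)
  (HnuX : nu (Xsub mul inv one Gam D r) = 1%E)
  (Hmuinv : forall g (A : set (OmegaB G)), measurable A ->
     mu (sigma_act mul inv g @^-1` A) = mu A)
  (Hnuinv : forall g (A : set (OmegaB G)), measurable A ->
     nu (sigma_act mul inv g @^-1` A) = nu A)
  (Hp : forall i, (1 <= i <= r)%N ->
     mu [set x : OmegaB G | x one = i] = nu [set x : OmegaB G | x one = i]) :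
  forall n, (1 <= n)%N ->
  forall A, Pn mul inv one Gam D r n A -> mu A = nu A.
Proof.
move=> n Hn A.
exact: (Pn_measure_eq Hgrp HGam0 HGamnorm HGamdec HD0 HDtr HDinc HDfin HDcup HDblock
  Hr Hn HmuX HnuX Hmuinv Hnuinv Hp).
Qed.
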